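(* For $n\in\mathbb Z_{\ge0}$ and $x,y\in\mathbb Z_{\ge0}$, let $p^{(1/2)}_n(x,y)$ be the probability that a simple symmetric random walk on $\mathbb Z$ started from $x$, reflected at $0$ (i.e. one considers $|S_n|$) and killed with probability $1/2$, independently, at each return to site $0$, is alive at time $n$ and located at $y$. Then $$p^{(1/2)}_n(x,y)=p_n(x-y)-p_n(x+y+2),$$ where $p_n(z)$ is the probability that a simple symmetric random walk on $\mathbb Z$ started at $0$ is at $z$ at time $n$. *)

From HB Require Import structures.
From mathcomp Require Import all_boot all_order all_algebra.
Set Implicit Arguments. Unset Strict Implicit. Unset Printing Implicit Defensive.
Import Order.TTheory GRing.Theory Num.Theory.
Local Open Scope ring_scope.

(* A sign sequence s : {ffun 'I_n -> bool} encodes the n increments of a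
   simple symmetric random walk (true = +1, false = -1); each of the 2^n
   sequences has probability (1/2)^n. *)

Definition walk (n : nat) (x : int) (s : {ffun 'I_n -> bool}) (k : nat) : int :=
  x + \sum_(i < n | (i < k)%N) (if s i then 1 else -1).

Definition srw_prob (n : nat) (z : int) : rat :=
  \sum_(s : {ffun 'I_n -> bool})
     (1 / 2) ^+ n * (if walk 0 s n == z then 1 else 0).

(* Number of visits of S (equivalently of |S|) to 0 at times 0,...,n-1,
   i.e. the number of times the walk sits at 0 and then makes a step. *)
Definition visits0 (n : nat) (x : int) (s : {ffun 'I_n -> bool}) : nat :=
  #|[set k : 'I_n | walk x s k == 0]|.

(* Survival of the independent killings has
   probability (1/2)^(number of visits to 0 before time n). *)
Definition killed_prob (n x y : nat) : rat :=
  \sum_(s : {ffun 'I_n -> bool})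
     (1 / 2) ^+ n * (1 / 2) ^+ (visits0 x%:Z s)
       * (if absz (walk x%:Z s n) == y then 1 else 0).

From HB Require Import structures.
From mathcomp Require Import all_boot all_order all_algebra.
From mathcomp Require Import zify ring.
Set Implicit Arguments. Unset Strict Implicit. Unset Printing Implicit Defensive.
Import Order.TTheory GRing.Theory Num.Theory.
Local Open Scope ring_scope.

(* Proof by the reflection principle, organised as an induction on n.  This yields one-step recursions:
   - p_{n+1}(z) = p_n(z-1)/2 + p_n(z+1)/2 for the free walk;
   - for the killed reflected walk, mass at y comes from y-1 (if y >= 1)
     and from y+1, each with weight 1/2; from 0 the walk moves to 1 surely
     but survives only with probability 1/2, so the same formula holds.
   The "mirror difference" q_n(y) = p_n(x-y) - p_n(x+y+2), defined for all
   integers y, satisfies the free recursion and vanishes at y = -1, which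
   makes it satisfy the killed recursion on y >= 0.  Both quantities are
   the indicator of y = x at time 0, so they agree for all n. *)

Definition ext (T : Type) (n : nat) (s : {ffun 'I_n -> T}) (t : T) :
  {ffun 'I_n.+1 -> T} :=
  [ffun i : 'I_n.+1 => if insub (val i) is Some j then s j else t].

Lemma ext_widen (T : Type) n (s : {ffun 'I_n -> T}) t (j : 'I_n) :
  ext s t (widen_ord (leqnSn n) j) = s j.
Proof.
rewrite /ext ffunE /= insubT; first exact: ltn_ord.
by move=> j_lt; congr (s _); apply: val_inj.
Qed.

Lemma ext_last (T : Type) n (s : {ffun 'I_n -> T}) t : ext s t ord_max = t.
Proof. by rewrite /ext ffunE /= insubF // ltnn. Qed.

Lemma ext_bij (T : Type) n :
  bijective (fun p : {ffun 'I_n -> T} * T => ext p.1 p.2).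
Proof.
exists (fun s : {ffun 'I_n.+1 -> T} =>
  ([ffun j => s (widen_ord (leqnSn n) j)], s ord_max)).
- move=> [s t] /=; rewrite ext_last; congr (_, _).
  by apply/ffunP => j; rewrite ffunE ext_widen.
- move=> s; apply/ffunP => i; rewrite /ext ffunE /=.
  case: insubP => [j _ val_j | i_ge].
  + by rewrite ffunE; congr (s _); apply: val_inj; rewrite /= val_j.
  + congr (s _); apply: val_inj => /=.
    by move: (ltn_ord i) i_ge; rewrite ltnS -leqNgt; lia.
Qed.

Lemma sum_ext (T : finType) (R : nmodType) n (F : {ffun 'I_n.+1 -> T} -> R) :
  \sum_(s' : {ffun 'I_n.+1 -> T}) F s' =
  \sum_(s : {ffun 'I_n -> T}) \sum_(t : T) F (ext s t).
Proof.
rewrite (reindex (fun p : {ffun 'I_n -> T} * T => ext p.1 p.2)) /=.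
  by rewrite -(pair_bigA _ (fun s t => F (ext s t))).
exact/onW_bij/ext_bij.
Qed.

Definition step (b : bool) : int := if b then 1 else -1.

Lemma walk_ext n x (s : {ffun 'I_n -> bool}) b k : (k <= n)%N ->
  walk x (ext s b) k = walk x s k.
Proof.
move=> le_kn; rewrite /walk; congr (_ + _).
rewrite big_mkcond big_ord_recr /= -big_mkcond /= ltnNge le_kn addr0.
by apply: eq_bigr => i _; rewrite ext_widen.
Qed.

Lemma walk_ext_last n x (s : {ffun 'I_n -> bool}) b :
  walk x (ext s b) n.+1 = walk x s n + step b.
Proof.
rewrite /walk big_mkcond big_ord_recr /= -big_mkcond /= ltnSn ext_last -addrA.
congr (_ + (_ + _)); rewrite [LHS]big_mkcond [RHS]big_mkcond /=.
apply: eq_bigr => i _.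
by rewrite ext_widen /= ltnS (ltnW (ltn_ord i)) (ltn_ord i).
Qed.

Lemma visits0_ext n x (s : {ffun 'I_n -> bool}) b :
  visits0 x (ext s b) = (visits0 x s + (walk x s n == 0))%N.
Proof.
rewrite /visits0 -!sum1_card big_mkcond big_ord_recr /= [in RHS]big_mkcond /=.
congr (_ + _)%N.
- by apply: eq_bigr => i _; rewrite !inE walk_ext // (ltnW (ltn_ord i)).
- by rewrite inE walk_ext //; case: (_ == _).
Qed.

Lemma walk0 n x (s : {ffun 'I_n -> bool}) : walk x s 0 = x.
Proof. by rewrite /walk big_pred0 ?addr0. Qed.

Lemma visits0_nil x (s : {ffun 'I_0 -> bool}) : visits0 x s = 0%N.
Proof. by apply/eqP; rewrite -leqn0 (leq_trans (max_card _)) ?card_ord. Qed.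

Lemma sum_nil (R : nmodType) (F : {ffun 'I_0 -> bool} -> R) :
  \sum_(s : {ffun 'I_0 -> bool}) F s = F [ffun=> true].
Proof. by apply: big_pred1 => s /=; apply/esym/eqP/ffunP => -[]. Qed.

Lemma srw_prob0 z : srw_prob 0 z = (z == 0)%:R.
Proof. by rewrite /srw_prob sum_nil walk0 expr0 mul1r eq_sym; case: eqP. Qed.

Lemma killed_prob0 x y : killed_prob 0 x y = (x == y)%:R.
Proof.
by rewrite /killed_prob sum_nil visits0_nil walk0 !expr0 !mul1r /=; case: eqP.
Qed.

Lemma srw_prob_rec n z :
  srw_prob n.+1 z = 1/2 * srw_prob n (z - 1) + 1/2 * srw_prob n (z + 1).
Proof.
rewrite /srw_prob sum_ext !big_distrr -big_split /=; apply: eq_bigr => s _.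
rewrite big_bool /= !walk_ext_last /step.
have -> : (walk 0 s n + 1 == z) = (walk 0 s n == z - 1) by apply/eqP/eqP; lia.
have -> : (walk 0 s n + -1 == z) = (walk 0 s n == z + 1) by apply/eqP/eqP; lia.
rewrite exprS; case: (_ == _); case: (_ == _); ring.
Qed.

(* Forward equation of the killed reflected walk: a step from |S| = 0
   lands at 1 for both signs, and the visit halves the surviving mass. *)
Lemma killed_prob_rec n x y :
  killed_prob n.+1 x y =
  1/2 * (if y is y'.+1 then killed_prob n x y' else 0)
  + 1/2 * killed_prob n x y.+1.
Proof.
rewrite /killed_prob sum_ext.
(* Mass coming from y - 1 is uniformly the mass with |S_n| + 1 = y. *)
have -> : (if y is y'.+1 then
   \sum_(s : {ffun 'I_n -> bool}) (1 / 2) ^+ n * (1 / 2) ^+ visits0 x s *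
     (if `|walk x s n| == y' then 1 else 0) else 0) =
   \sum_(s : {ffun 'I_n -> bool}) (1 / 2) ^+ n * (1 / 2) ^+ visits0 x s *
     (if (`|walk x s n|.+1 == y)%N then 1 else 0) :> rat.
  by case: y => [|y]; [rewrite big1 // => s _; rewrite mulr0 | apply: eq_bigr].
rewrite !big_distrr -big_split /=; apply: eq_bigr => s _.
rewrite big_bool /= !visits0_ext !walk_ext_last /step !exprD exprS.
case: (walk x s n) => [[|m]|m] /=.
- by rewrite add0n subnn expr1; field.
- by rewrite addn1 subn1 /= eqSS expr0; field.
- have -> : `|(Negz m + 1)%R|%N = m by lia.
  by rewrite addn0 eqSS expr0; field.
Qed.

(* The free-walk mass at x - y minus the mass at the mirror image of
   x - y in the site -1, i.e. at x + y + 2. *)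
Definition mirror_diff (n : nat) (x y : int) : rat :=
  srw_prob n (x - y) - srw_prob n (x + y + 2).

Lemma mirror_diff_rec n x y :
  mirror_diff n.+1 x y =
  1/2 * mirror_diff n x (y - 1) + 1/2 * mirror_diff n x (y + 1).
Proof.
rewrite /mirror_diff !srw_prob_rec.
have -> : x - (y - 1) = x - y + 1 by ring.
have -> : x - (y + 1) = x - y - 1 by ring.
have -> : x + (y - 1) + 2 = x + y + 2 - 1 by ring.
have -> : x + (y + 1) + 2 = x + y + 2 + 1 by ring.
ring.
Qed.

(* At y = -1 both terms are the mass at x + 1. *)
Lemma mirror_diff_absorbed n x : mirror_diff n x (-1) = 0.
Proof. by rewrite /mirror_diff (_ : x + -1 + 2 = x - -1) ?subrr //; ring. Qed.

Theorem proposition3p1 (n x y : nat) :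
  killed_prob n x y = srw_prob n (x%:Z - y%:Z) - srw_prob n (x%:Z + y%:Z + 2).
Proof.
rewrite -/(mirror_diff n x y); elim: n y => [|n IH] y.
  rewrite killed_prob0 /mirror_diff !srw_prob0.
  have -> : (x%:Z + y%:Z + 2 == 0) = false by apply/eqP; lia.
  have -> : (x%:Z - y%:Z == 0) = (x == y) by apply/eqP/eqP; lia.
  by rewrite subr0.
rewrite killed_prob_rec mirror_diff_rec IH.
have -> : y%:Z + 1 = y.+1 by lia.
case: y => [|y]; first by rewrite sub0r mirror_diff_absorbed.
by rewrite IH (_ : y.+1%:Z - 1 = y) //; lia.
Qed.
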